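(* If $s\ge 3$ and $q\ge m+1$, then $\pi\ge 2n-3q-3m+1$.
   Context: $G$ is a set of size $n$ and $G(\circ)$, $G(\ast)$ are distinct groups on $G$ with the same identity element. $\mathrm{diff}(\circ,\ast)=\{(a,b):a\circ b\ne a\ast b\}$, $\mathrm{dist}(\circ,\ast)=|\mathrm{diff}(\circ,\ast)|$, $\mathrm{dist}_a=|\{b:a\circ b\ne a\ast b\}|$; $H=\{a:\mathrm{dist}_a=0\}$, $h=|H|$; $K=\{a:\mathrm{dist}_a<n/3\}$, $k=|K|$; $m=\min\{\mathrm{dist}_a:\mathrm{dist}_a>0\}$. Standing assumption: $m\ge 3$. Let $q=\lceil n/3\rceil$ and the profit $\pi=\mathrm{dist}(\circ,\ast)-((k-h)m+(n-k)q)$. Let $S=\{(a,b)\in\mathrm{diff}(\circ,\ast):a,b\in K,\ a\ne b\}$, $s=|S|$. *)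

From mathcomp Require Import all_boot all_order all_algebra.
Set Implicit Arguments. Unset Strict Implicit. Unset Printing Implicit Defensive.
Import GRing.Theory Num.Theory.

Section Defs.
Variable T : finType.

Definition is_group (op : T -> T -> T) (e : T) : Prop :=
  [/\ (forall x y z, op x (op y z) = op (op x y) z),
      (forall x, op e x = x /\ op x e = x) &
      (forall x, exists y, op x y = e /\ op y x = e)].

Variables (op1 op2 : T -> T -> T).

Definition diffset : {set T * T} := [set p | op1 p.1 p.2 != op2 p.1 p.2].
Definition dist : nat := #|diffset|.
Definition dista (a : T) : nat := #|[set b | op1 a b != op2 a b]|.
Definition Hset : {set T} := [set a | dista a == 0].
Definition hcard : nat := #|Hset|.
(* K = {a : dist_a < n/3}  (i.e. 3 dist_a < n), k = |K| *)
Definition Kset : {set T} := [set a | 3 * dista a < #|T|].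
Definition kcard : nat := #|Kset|.
(* m = min { dist_a : dist_a > 0 } (default #|T| if no such a,
   which cannot occur when the operations differ) *)
Definition mmin : nat := \big[minn/#|T|]_(a | 0 < dista a) dista a.
(* q = ceil(n/3) *)
Definition qceil : nat := (#|T| + 2) %/ 3.
Definition profit : int :=
  (dist%:Z - ((kcard%:Z - hcard%:Z) * mmin%:Z + (#|T|%:Z - kcard%:Z) * qceil%:Z))%R.
Definition Sset : {set T * T} :=
  [set p in diffset | [&& p.1 \in Kset, p.2 \in Kset & p.1 != p.2]].
Definition scard : nat := #|Sset|.

End Defs.

From mathcomp Require Import all_boot all_order all_algebra.
From mathcomp Require Import zify.
Import Order.TTheory GRing.Theory Num.Theory.

Set Implicit Arguments.
Unset Strict Implicit.
Unset Printing Implicit Defensive.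

(* Put g(a) = dist_a - cost(a), where cost is 0 on H, m on K \ H and q off K,
   so that pi = sum_a g(a) and every g(a) >= 0.  If a o b <> a * b, then by
   associativity and cancellation (a o b) o x <> (a o b) * x for every x with
   b o x = b * x and a o (b * x) = a * (b * x); hence
   n <= dist_(a o b) + dist_a + dist_b, the same holds for a * b, and both
   products lie outside K when a, b lie in K.  As s >= 3, S contains pairs
   (a1, b1), (a2, b2) with {a1, b1} <> {a2, b2}, which yields two distinct
   products c1, c2 outside K.  Bounding pi below by
   g(c1) + g(c2) + sum of g over {a1, b1, a2, b2} gives 2n - 3q - 3m + 1 when
   the two supports meet, and 2n - 2q - 4m, which is at least as large since
   q >= m + 1, when they are disjoint. *)

Lemma big_set2 (R : Type) (idx : R) (op : Monoid.com_law idx) (I : finType)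
    (a b : I) (F : I -> R) :
  a != b -> \big[op/idx]_(i in [set a; b]) F i = op (F a) (F b).
Proof. by move=> ab; rewrite big_setU1 ?inE // big_set1. Qed.

Lemma sum_indicator_card (I : finType) (A : {pred I}) :
  (\sum_i ((i \in A : nat)%:Z) = #|A|%:Z)%R.
Proof.
rewrite (eq_bigr (fun i => if i \in A then 1 else 0)%R) => [|i _].
  by rewrite -big_mkcond sumr_const -natz.
by case: (i \in A).
Qed.

Lemma sum_setUI (I : finType) (A B : {set I}) (F : I -> nat) :
  \sum_(i in A :|: B) F i + \sum_(i in A :&: B) F i
  = \sum_(i in A) F i + \sum_(i in B) F i.
Proof.
rewrite [\sum_(i in A :|: B) _]big_mkcond [\sum_(i in A :&: B) _]big_mkcond.
rewrite [\sum_(i in A) _]big_mkcond [\sum_(i in B) _]big_mkcond -!big_split.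
apply: eq_bigr => i _.
by rewrite !inE; case: (i \in A); case: (i \in B); rewrite /= ?addn0.
Qed.

Lemma card_setI_lt (T : finType) (A B : {set T}) :
  #|A| = #|B| -> A != B -> #|A :&: B| < #|A|.
Proof.
move=> eq_card; apply: contraNT; rewrite -leqNgt => le_AI.
have /eqP/setIidPl sAB : A :&: B == A by rewrite eqEcard subsetIl.
by rewrite eqEcard sAB -eq_card leqnn.
Qed.

Lemma set2_inj (T : finType) (a1 b1 a2 b2 : T) :
  [set a1; b1] = [set a2; b2] -> (a2, b2) = (a1, b1) \/ (a2, b2) = (b1, a1).
Proof.
move=> eq12.
have: a2 \in [set a1; b1] by rewrite eq12 set21.
have: b2 \in [set a1; b1] by rewrite eq12 set22.
have: a1 \in [set a2; b2] by rewrite -eq12 set21.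
have: b1 \in [set a2; b2] by rewrite -eq12 set22.
by rewrite !inE => /orP[]/eqP E1 /orP[]/eqP E2 /orP[]/eqP E3 /orP[]/eqP E4;
  subst; auto.
Qed.

Lemma exists_pairs_of_distinct_supports (T : finType) (S : {set T * T}) :
  2 < #|S| ->
  exists2 p1, p1 \in S & exists2 p2, p2 \in S & [set p1.1; p1.2] != [set p2.1; p2.2].
Proof.
move=> S_gt2.
have [[a b] abS] : exists p, p \in S by apply/card_gt0P; lia.
have [[a' b'] /setDP[abS' abX]] : exists p, p \in S :\: [set (a, b); (b, a)].
  have X_le2 : #|[set (a, b); (b, a)]| <= 2 by rewrite cards2; case: (_ != _).
  have := leq_trans (subset_leq_card (subsetIr S _)) X_le2.
  by move=> SX_le2; apply/card_gt0P; rewrite cardsD; lia.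
exists (a, b) => //; exists (a', b') => //=.
by apply: contra abX => /eqP/set2_inj[]->; rewrite !inE eqxx ?orbT.
Qed.

Section Profit.
Variables (T : finType) (op1 op2 : T -> T -> T).

Local Notation d := (dista op1 op2).
Local Notation K := (Kset op1 op2).
Local Notation H := (Hset op1 op2).
Local Notation m := (mmin op1 op2).
Local Notation q := (qceil T).

Lemma dist_sum_dista : dist op1 op2 = \sum_a d a.
Proof.
rewrite (eq_bigr (fun a => \sum_b ((a, b) \in diffset op1 op2 : nat))) => [|a _].
  rewrite pair_bigA /dist -sum1_card big_mkcond.
  by apply: eq_bigr => -[a b] _; case: ifP.
rewrite /dista -sum1_card big_mkcond.
by apply: eq_bigr => b _; rewrite !inE; case: ifP.
Qed.

Lemma mmin_le_dista a : 0 < d a -> m <= d a.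
Proof.
exact: (@bigmin_le_cond _ nat _ #|T| a (fun i => 0 < d i)).
Qed.

Lemma dista_lt_qceil a : a \in K -> d a < q.
Proof. by rewrite inE /qceil; lia. Qed.

Lemma notin_Kset_of_triangle a b c :
  #|T| <= d c + d a + d b -> a \in K -> b \in K -> c \notin K.
Proof. by rewrite !inE; lia. Qed.

Definition cost (a : T) : nat := if a \in K then (if a \in H then 0 else m) else q.

Local Notation gain a := ((d a)%:Z - (cost a)%:Z)%R.

Lemma Hset_sub_Kset : H \subset K.
Proof. by apply/subsetP => a; rewrite !inE => /eqP->; apply/card_gt0P; exists a. Qed.

Lemma profit_sum_gain : profit op1 op2 = (\sum_a gain a)%R.
Proof.
have cost_indicator a : ((cost a)%:Z =
    ((a \in K : nat)%:Z - (a \in H : nat)%:Z) * m%:Z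
    + (1 - (a \in K : nat)%:Z) * q%:Z)%R.
  have := subsetP Hset_sub_Kset a.
  by rewrite /cost; case: (a \in K); case: (a \in H) => //=; lia.
rewrite /profit sumrB dist_sum_dista -[Posz (\sum_a _)]natz natr_sum.
rewrite (eq_bigr _ (fun a _ => cost_indicator a)) big_split /= -!mulr_suml.
rewrite !sumrB sumr_const !sum_indicator_card natz.
by under eq_bigr do rewrite natz.
Qed.

Lemma gain_ge0 a : (0 <= gain a)%R.
Proof.
rewrite /cost !inE; case: ifP => [_|]; last by rewrite /qceil; lia.
by case: eqP => [->//|/eqP]; rewrite -lt0n => /mmin_le_dista; lia.
Qed.

Lemma gain_Kset a : a \in K -> ((d a)%:Z - m%:Z <= gain a)%R.
Proof. by rewrite /cost => ->; case: ifP; lia. Qed.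

Lemma gain_notin_Kset a : a \notin K -> gain a = ((d a)%:Z - q%:Z)%R.
Proof. by rewrite /cost => /negbTE->. Qed.

Lemma sum_gain_le_profit (A : {set T}) : (\sum_(a in A) gain a <= profit op1 op2)%R.
Proof.
rewrite profit_sum_gain [leRHS](bigID (mem A)) /= lerDl.
by apply: sumr_ge0 => a _; apply: gain_ge0.
Qed.

Lemma profit_lower_bound (C U : {set T}) : C \subset ~: K -> U \subset K ->
  (\sum_(c in C) ((d c)%:Z - q%:Z) + ((\sum_(u in U) d u)%:Z - (#|U| * m)%:Z)
    <= profit op1 op2)%R.
Proof.
move=> CK UK; apply: le_trans (sum_gain_le_profit (C :|: U)).
have CU : [disjoint C & U].
  by apply: disjointWr UK _; rewrite -[K]setCK -subsets_disjoint.
rewrite [leRHS](eq_bigl [predU C & U]) => [|x]; last by rewrite !inE.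
rewrite bigU //=; apply: lerD.
  by apply: ler_sum => c cC; rewrite gain_notin_Kset // -in_setC (subsetP CK).
apply: le_trans (ler_sum (index_enum T)
  (fun u (uU : u \in U) => @gain_Kset u (subsetP UK u uU))).
rewrite sumrB sumr_const -mulr_natl natz -PoszM.
rewrite -[Posz (\sum_(u in U) _)]natz natr_sum.
by under eq_bigr do rewrite natz.
Qed.

End Profit.

Lemma dista_sym (T : finType) (op1 op2 : T -> T -> T) a :
  dista op1 op2 a = dista op2 op1 a.
Proof. by apply: eq_card => b; rewrite !inE eq_sym. Qed.

Section GroupCancellation.
Variables (T : finType) (op : T -> T -> T) (e : T).
Hypothesis opG : is_group op e.

Lemma is_group_mulI : right_injective op.
Proof.
case: opG => opA ope opV x y z eq_xyz.
have [x' [_ x'x]] := opV x.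
by rewrite -(proj1 (ope y)) -(proj1 (ope z)) -x'x -!opA eq_xyz.
Qed.

Lemma is_group_mulIg : left_injective op.
Proof.
case: opG => opA ope opV x y z eq_yxz.
have [x' [xx' _]] := opV x.
by rewrite -(proj2 (ope y)) -(proj2 (ope z)) -xx' !opA eq_yxz.
Qed.

End GroupCancellation.

Section Triangle.
Variables (T : finType) (op1 op2 : T -> T -> T) (e : T).
Hypotheses (G1 : is_group op1 e) (G2 : is_group op2 e).

Local Notation d := (dista op1 op2).

Lemma dista_triangle a b : op1 a b != op2 a b -> #|T| <= d (op1 a b) + d a + d b.
Proof.
move=> ab.
set good := [set x | (op1 b x == op2 b x) && (op1 a (op2 b x) == op2 a (op2 b x))].
have good_diff : good \subset [set x | op1 (op1 a b) x != op2 (op1 a b) x].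
  apply/subsetP => x; rewrite !inE => /andP[/eqP bx /eqP abx].
  case: G1 G2 => [A1 _ _] [A2 _ _].
  rewrite -A1 bx abx A2.
  by apply: contra ab => /eqP/(is_group_mulIg G2)->.
have bad_cover : ~: good \subset
    [set x | op1 b x != op2 b x] :|: op2 b @^-1: [set y | op1 a y != op2 a y].
  by apply/subsetP => x; rewrite !inE negb_and.
have := cardsC good.
have := subset_leq_card good_diff.
have := leq_trans (subset_leq_card bad_cover) (leq_card_setU _ _).
rewrite card_preimset; last exact: (is_group_mulI G2).
rewrite /dista; lia.
Qed.

End Triangle.

Section TriangleOp2.
Variables (T : finType) (op1 op2 : T -> T -> T) (e : T).
Hypotheses (G1 : is_group op1 e) (G2 : is_group op2 e).

Local Notation d := (dista op1 op2).

Lemma dista_triangle_op2 a b : op1 a b != op2 a b -> #|T| <= d (op2 a b) + d a + d b.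
Proof.
move=> ab; rewrite !(@dista_sym _ op1 op2).
by apply: (dista_triangle G2 G1); rewrite eq_sym.
Qed.

Lemma exists_dista_triangle_avoiding a b c0 : op1 a b != op2 a b ->
  exists2 c, c != c0 & #|T| <= d c + d a + d b.
Proof.
move=> ab; case: (eqVneq (op1 a b) c0) => [<-|ab_c0].
  by exists (op2 a b); [rewrite eq_sym | apply: dista_triangle_op2].
by exists (op1 a b); last apply: (dista_triangle G1 G2 ab).
Qed.

End TriangleOp2.

(* i stands for #|A :&: B|: for i = 1 the bound is exact, for i = 0 it uses m < q. *)
Lemma two_triangles_bound (n q m i dc1 dc2 da1 db1 da2 db2 sU sI : nat) (P : int) :
  m < q -> i < 2 -> sI <= i * q.-1 ->
  n <= dc1 + da1 + db1 -> n <= dc2 + da2 + db2 ->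
  sU + sI = da1 + db1 + (da2 + db2) ->
  (dc1%:Z - q%:Z + (dc2%:Z - q%:Z) + (sU%:Z - ((4 - i) * m)%:Z) <= P)%R ->
  ((2 * n)%:Z - (3 * q)%:Z - (3 * m)%:Z + 1 <= P)%R.
Proof. by case: i => [|[|//]] /=; lia. Qed.

Theorem lemma10p1 (T : finType) (op1 op2 : T -> T -> T) (e : T) :
  is_group op1 e -> is_group op2 e ->
  (exists a b, op1 a b <> op2 a b) ->
  3 <= mmin op1 op2 ->
  3 <= scard op1 op2 ->
  (mmin op1 op2).+1 <= qceil T ->
  ((2 * #|T|)%:Z - (3 * qceil T)%:Z - (3 * mmin op1 op2)%:Z + 1 <= profit op1 op2)%R.
Proof.
move=> G1 G2 _ _ S_ge3 m_lt_q.
have [[a1 b1] /setIdP[ab1 /and3P[a1K b1K a1b1]]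
      [[a2 b2] /setIdP[ab2 /and3P[a2K b2K a2b2]] A_neq_B]] :=
  exists_pairs_of_distinct_supports S_ge3.
rewrite /diffset !inE /= in ab1 ab2.
rewrite /= in a1K b1K a1b1 a2K b2K a2b2 A_neq_B.
set A := [set a1; b1] in A_neq_B *; set B := [set a2; b2] in A_neq_B *.
have tri1 := dista_triangle G1 G2 ab1.
have [c2 c2_neq tri2] := exists_dista_triangle_avoiding G1 G2 (op1 a1 b1) ab2.
have CK : [set op1 a1 b1; c2] \subset ~: Kset op1 op2.
  apply/subsetP => c; rewrite in_set2 in_setC => /orP[]/eqP->.
    exact: notin_Kset_of_triangle tri1 a1K b1K.
  exact: notin_Kset_of_triangle tri2 a2K b2K.
have UK : A :|: B \subset Kset op1 op2.
  by rewrite !subUset !sub1set a1K b1K a2K b2K.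
have := profit_lower_bound CK UK; rewrite big_set2 1?eq_sym //.
have := sum_setUI A B (dista op1 op2); rewrite !big_set2 //.
have I_lt2 : #|A :&: B| < 2.
  by have := card_setI_lt _ A_neq_B; rewrite !cards2 a1b1 a2b2; apply.
have sumI : \sum_(x in A :&: B) dista op1 op2 x <= #|A :&: B| * (qceil T).-1.
  rewrite -sum_nat_const; apply: leq_sum => x /setIP[xA _].
  have /dista_lt_qceil : x \in Kset op1 op2 by apply: (subsetP UK); rewrite inE xA.
  lia.
rewrite -[#|A :|: B|](addnK #|A :&: B|) cardsUI !cards2 a1b1 a2b2.
exact: two_triangles_bound m_lt_q I_lt2 sumI tri1 tri2.
Qed.
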